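(* Let $D\in\mathbb{D}^n_+$, $W\in\mathbb{R}^{n\times n}$, $u\in\mathbb{R}^n$, and define $f_1(x)=-Dx+[Wx+u]_0^1$. Suppose $W-D$ is Lyapunov diagonally stable. Then there exists a unique $x^\star\in\mathbb{R}^n$ such that $f_1(x^\star)=0$. In particular, for each $u$, the linear-threshold network $\dot x=-Dx+[Wx+u]_0^1$ admits a unique equilibrium.
   Context: $\mathbb{D}^n_+$ is the set of $n\times n$ diagonal matrices with positive diagonal entries. $[z]_0^1=\max(0,\min(z,1))$, applied elementwise to vectors. A matrix $M$ is Lyapunov diagonally stable if $M^\top\Lambda+\Lambda M\prec0$ for some $\Lambda\in\mathbb{D}^n_+$. *)

From mathcomp Require Import all_boot all_order all_algebra.
Set Implicit Arguments. Unset Strict Implicit. Unset Printing Implicit Defensive.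
Import Order.TTheory GRing.Theory Num.Theory.
Local Open Scope ring_scope.

Definition posdiag (R : realFieldType) (n : nat) (D : 'M[R]_n) : Prop :=
  is_diag_mx D /\ forall i : 'I_n, 0 < D i i.

Definition negdef (R : realFieldType) (n : nat) (A : 'M[R]_n) : Prop :=
  forall x : 'cV[R]_n, x != 0 -> (x^T *m A *m x) 0 0 < 0.

Definition lyap_diag_stable (R : realFieldType) (n : nat) (M : 'M[R]_n) : Prop :=
  exists L : 'M[R]_n, posdiag L /\ negdef (M^T *m L + L *m M).

Definition clip01 (R : realFieldType) (z : R) : R := Num.max 0 (Num.min z 1).

Definition clip01v (R : realFieldType) (n : nat) (v : 'cV[R]_n) : 'cV[R]_n :=
  map_mx (@clip01 R) v.

Definition f1 (R : realFieldType) (n : nat) (D W : 'M[R]_n) (u x : 'cV[R]_n)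
  : 'cV[R]_n := - (D *m x) + clip01v (W *m x + u).

(* With p = D x, the zeros of f1 are the fixed points of p |-> [W D^-1 p + u]_0^1, which are
   also the fixed points of the damped projected step
     T p = [p + tau C ((W D^-1 - I) p + u)]_0^1,   C = Lambda D^-1,
   because for t > 0, [a + t (b - a)]_0^1 = a iff [b]_0^1 = a.  The clip is firmly
   nonexpansive, and Lyapunov diagonal stability of W - D, hence of W D^-1 - I, makes
   C (W D^-1 - I) negative definite.  So for small tau > 0 the map T is a contraction for the
   Euclidean norm, and Banach's theorem gives exactly one fixed point. *)

From HB Require Import structures.
From mathcomp Require Import all_boot all_order all_algebra.
From mathcomp Require Import reals interval_inference ring lra.
From mathcomp Require Import boolp classical_sets functions topology normedtype sequences derive.
Set Implicit Arguments. Unset Strict Implicit. Unset Printing Implicit Defensive.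
Import Order.TTheory GRing.Theory Num.Theory.
Import numFieldNormedType.Exports.
Local Open Scope classical_set_scope.
Local Open Scope ring_scope.

Section Clip01.
Variable R : realFieldType.
Implicit Types a b t z : R.

Variant clip01_spec z : R -> Prop :=
  | Clip01Low of z <= 0 : clip01_spec z 0
  | Clip01Id of 0 <= z <= 1 : clip01_spec z z
  | Clip01High of 1 <= z : clip01_spec z 1.

Lemma clip01P z : clip01_spec z (clip01 z).
Proof.
rewrite /clip01; case: (leP z 1) => [z_le1|/ltW z_ge1]; last first.
  by rewrite max_r ?ler01 //; exact: Clip01High.
case: (leP 0 z) => [z_ge0|/ltW z_le0].
  by apply: Clip01Id; apply/andP.
exact: Clip01Low.
Qed.

Lemma clip01_firmly_nonexpansive a b :
  0 <= (clip01 a - clip01 b) * ((a - b) - (clip01 a - clip01 b)).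
Proof. by case: (clip01P a) => ha; case: (clip01P b) => hb; nra. Qed.

Lemma clip01_sqr_lipschitz a b : (clip01 a - clip01 b) ^+ 2 <= (a - b) ^+ 2.
Proof.
have := clip01_firmly_nonexpansive a b; set d := clip01 a - clip01 b => hd.
have -> : (a - b) ^+ 2 = d ^+ 2 + ((a - b - d) ^+ 2 + 2 * (d * (a - b - d))) by ring.
by rewrite lerDl addr_ge0 ?sqr_ge0 // mulr_ge0.
Qed.

Lemma clip01_damped_fixed a b t :
  0 < t -> clip01 (a + t * (b - a)) = a <-> clip01 b = a.
Proof.
move=> t_gt0; split.
  by case: (clip01P (a + t * (b - a))) => ha e; case: (clip01P b) => hb; nra.
by case: (clip01P b) => hb e; case: (clip01P (a + t * (b - a))) => ha; nra.
Qed.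

End Clip01.

Section QuadraticForms.
Variables (R : realFieldType) (n : nat).
Implicit Types (A G P : 'M[R]_n) (d : 'rV[R]_n) (u v x : 'cV[R]_n).

Definition sqnorm v : R := \sum_i v i 0 ^+ 2.

Definition qform A x : R := (x^T *m A *m x) 0 0.

Lemma qformE A x : qform A x = \sum_i \sum_j x i 0 * A i j * x j 0.
Proof.
rewrite /qform mxE exchange_big; apply: eq_bigr => j _.
by rewrite mxE mulr_suml; apply: eq_bigr => i _; rewrite !mxE.
Qed.

Lemma qformZ A a x : qform A (a *: x) = a ^+ 2 * qform A x.
Proof.
rewrite !qformE mulr_sumr; apply: eq_bigr => i _.
by rewrite mulr_sumr; apply: eq_bigr => j _; rewrite !mxE; ring.
Qed.

Lemma qform_trmx A x : qform A^T x = qform A x.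
Proof.
have trmx11 (M : 'M[R]_1) : M^T 0 0 = M 0 0 by rewrite mxE.
by rewrite /qform -trmx11 !trmx_mul !trmxK mulmxA.
Qed.

Lemma qformD A G x : qform (A + G) x = qform A x + qform G x.
Proof. by rewrite /qform mulmxDr mulmxDl mxE. Qed.

Lemma qform_congr A P x : qform (P^T *m A *m P) x = qform A (P *m x).
Proof. by rewrite /qform trmx_mul !mulmxA. Qed.

Lemma sqnorm_mulmx A x : sqnorm (A *m x) = qform (A^T *m A) x.
Proof.
rewrite /qform mulmxA -trmx_mul -mulmxA /sqnorm mxE; apply: eq_bigr => i _.
by rewrite [(A *m x)^T _ _]mxE expr2.
Qed.

Lemma sqnorm_ge0 v : 0 <= sqnorm v.
Proof. by apply: sumr_ge0 => i _; exact: sqr_ge0. Qed.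

Lemma sqr_coord_le_sqnorm v i : v i 0 ^+ 2 <= sqnorm v.
Proof.
by rewrite /sqnorm (bigD1 i) //= lerDl; apply: sumr_ge0 => j _; exact: sqr_ge0.
Qed.

Lemma sqnorm_le_coord_bound v c :
  (forall i, `|v i 0| <= c) -> sqnorm v <= n%:R * c ^+ 2.
Proof.
move=> le_c; have -> : n%:R * c ^+ 2 = \sum_(i < n) c ^+ 2.
  by rewrite sumr_const card_ord mulr_natl.
apply: ler_sum => i _; rewrite -real_normK ?num_real // lerXn2r ?nnegrE //.
exact: le_trans (le_c i).
Qed.

Lemma sqnorm_addZ G e t :
  sqnorm (e + t *: (G *m e)) = sqnorm e + 2 * t * qform G e + t ^+ 2 * sqnorm (G *m e).
Proof.
rewrite /qform -mulmxA mxE /sqnorm mulr_sumr mulr_sumr -!big_split /=.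
by apply: eq_bigr => i _; rewrite !mxE; ring.
Qed.

(* |x_i x_j| <= (x_i^2 + x_j^2) / 2 <= sqnorm x *)
Lemma qform_le_sqnorm A : exists2 K, 0 <= K & forall x, qform A x <= K * sqnorm x.
Proof.
exists (\sum_i \sum_j `|A i j|); first by do 2 apply: sumr_ge0 => ? _.
move=> x; rewrite qformE mulr_suml; apply: ler_sum => i _.
rewrite mulr_suml; apply: ler_sum => j _.
have xij : `|x i 0| * `|x j 0| <= sqnorm x.
  have := sqr_coord_le_sqnorm x i; have := sqr_coord_le_sqnorm x j.
  rewrite -[x i 0 ^+ 2]real_normK ?num_real // -[x j 0 ^+ 2]real_normK ?num_real //.
  have := sqr_ge0 (`|x i 0| - `|x j 0|); lra.
apply: le_trans (ler_norm _) _; rewrite !normrM.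
have -> : `|x i 0| * `|A i j| * `|x j 0| = `|A i j| * (`|x i 0| * `|x j 0|) by ring.
exact: ler_wpM2l.
Qed.

Lemma negdef_congr A P : negdef A -> P \in unitmx -> negdef (P^T *m A *m P).
Proof.
move=> ndA Pu x x0; rewrite -/(qform _ x) qform_congr; apply: ndA.
by apply: contra x0 => /eqP Px0; rewrite -(mulKmx Pu x) Px0 mulmx0.
Qed.

Lemma negdef_symmetric_part A : negdef (A^T + A) -> negdef A.
Proof.
move=> ndA x x0; have : qform (A^T + A) x < 0 := ndA x x0.
by rewrite qformD qform_trmx /qform; lra.
Qed.

Lemma posdiag_diag_mx d : posdiag (diag_mx d) <-> forall i, 0 < d 0 i.
Proof.
split=> [[_ dpos] i|dpos]; first by have := dpos i; rewrite mxE eqxx mulr1n.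
split=> [|i]; first exact: diag_mx_is_diag.
by rewrite mxE eqxx mulr1n.
Qed.

Lemma posdiagP P : posdiag P -> exists2 d, P = diag_mx d & forall i, 0 < d 0 i.
Proof. by case=> /diag_mxP[d ->] dpos; exists d => //; apply/posdiag_diag_mx. Qed.

Lemma unitmx_posdiag d : (forall i, 0 < d 0 i) -> diag_mx d \in unitmx.
Proof.
by move=> dpos; rewrite unitmxE det_diag unitfE prodf_seq_neq0; apply/allP => i _; rewrite gt_eqF.
Qed.

(* If L is a Lyapunov weight for A, then P L is one for A P. *)
Lemma lyap_diag_stable_mulmx_diag A d :
  lyap_diag_stable A -> (forall i, 0 < d 0 i) -> lyap_diag_stable (A *m diag_mx d).
Proof.
move=> [_ [/posdiagP[l -> lpos] ndA]] dpos; set P := diag_mx d; set L := diag_mx l in ndA *.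
have PL : P *m L = L *m P := diag_mx_comm d l.
exists (P *m L); split.
  by rewrite mulmx_diag; apply/posdiag_diag_mx => i; rewrite mxE mulr_gt0.
have e1 : (A *m P)^T *m (P *m L) = P^T *m (A^T *m L) *m P by rewrite trmx_mul PL !mulmxA.
have e2 : P *m L *m (A *m P) = P^T *m (L *m A) *m P by rewrite tr_diag_mx !mulmxA.
rewrite e1 e2 -mulmxDl -mulmxDr.
exact: negdef_congr ndA (unitmx_posdiag dpos).
Qed.

Lemma clip01vE v i j : clip01v v i j = clip01 (v i j).
Proof. by rewrite mxE. Qed.

Lemma sqnorm_clip01v_sub v w : sqnorm (clip01v v - clip01v w) <= sqnorm (v - w).
Proof. by apply: ler_sum => i _; rewrite !mxE clip01_sqr_lipschitz. Qed.

End QuadraticForms.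

(* Joins the complete uniform structure and the normed structure that the library gives
   matrices over a real type separately. *)
HB.instance Definition _ (R : realType) m n := Complete.on 'M[R]_(m, n).

Lemma contraction_unique_fixed_point (R : realType) (X : completeNormedModType R)
    (g : X -> X) (k : R) :
  0 <= k < 1 -> (forall x y, `|g x - g y| <= k * `|x - y|) -> exists! p, g p = p.
Proof.
move=> /andP[k_ge0 k_lt1] g_lip.
have gT : {homo g : x / [set: X] x >-> [set: X] x} by [].
have g_contr : is_contraction (mkfun_fun gT).
  by exists (NngNum k_ge0); split=> // -[x y] _; exact: g_lip.
have [p _ gp] := banach_fixed_point g_contr closedT (ex_intro _ 0 I).
exists p; split=> [|q gq]; first by rewrite [in RHS]gp.
exact: contraction_fixpoint_unique g_contr I I gp (esym gq).
Qed.

Section NormEquivalence.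
Variables (R : realType) (n : nat).

Lemma normr_coord_le_mx_norm m k (x : 'M[R]_(m, k)) i j : `|x i j| <= `|x|.
Proof.
by rewrite [leRHS]/Num.norm /= mx_normrE; apply/bigmax_geP; right; exists (i, j).
Qed.

Lemma sqr_mx_norm_le_sqnorm (v : 'cV[R]_n) : `|v| ^+ 2 <= sqnorm v.
Proof.
have [->|] := eqVneq `|v| 0; first by rewrite expr0n sqnorm_ge0.
rewrite /Num.norm /= => /mx_norm_neq0[[i j] /= ->].
by rewrite [j]ord1 real_normK ?num_real // sqr_coord_le_sqnorm.
Qed.

Lemma sqnorm_le_mx_norm (v : 'cV[R]_n) : sqnorm v <= n%:R * `|v| ^+ 2.
Proof. by apply: sqnorm_le_coord_bound => i; exact: normr_coord_le_mx_norm. Qed.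

End NormEquivalence.

(* Some iterate f^k is a 1/2-contraction for the max norm, since that norm is
   equivalent to the Euclidean one; a fixed point of f^k is then fixed by f. *)
Lemma sqnorm_contraction_unique_fixed_point (R : realType) n
    (f : 'cV[R]_n -> 'cV[R]_n) (rho : R) :
  0 <= rho < 1 -> (forall p q, sqnorm (f p - f q) <= rho * sqnorm (p - q)) ->
  exists! p, f p = p.
Proof.
move=> /andP[rho_ge0 rho_lt1] f_contr.
have iter_contr k p q : sqnorm (iter k f p - iter k f q) <= rho ^+ k * sqnorm (p - q).
  elim: k => [|k IHk]; first by rewrite mul1r.
  by apply: le_trans (f_contr _ _) _; rewrite exprS -mulrA ler_wpM2l.
have [k rhok_small] : exists k, rho ^+ k * (4 * n%:R) <= 1.
  have c_gt0 : 0 < (4 * n%:R + 1 : R)^-1 by rewrite invr_gt0 ltr_wpDl ?mulr_ge0.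
  have rho_norm_lt1 : `|rho| < 1 by rewrite ger0_norm.
  have [N _ rhoN] := cvgr0_norm_lt _ (cvg_expr rho_norm_lt1) _ c_gt0.
  exists N; have := le_lt_trans (ler_norm _) (rhoN N (leqnn N)).
  rewrite -div1r ltr_pdivlMr ?ltr_wpDl ?mulr_ge0 // mulrDr mulr1 => h.
  by have := exprn_ge0 N rho_ge0; lra.
have half_contr p q : `|iter k f p - iter k f q| <= 2^-1 * `|p - q|.
  rewrite -(@ler_pXn2r _ 2) ?nnegrE ?mulr_ge0 ?invr_ge0 // exprMn.
  apply: le_trans (sqr_mx_norm_le_sqnorm _) _; apply: le_trans (iter_contr _ _ _) _.
  apply: le_trans (ler_wpM2l (exprn_ge0 k rho_ge0) (sqnorm_le_mx_norm (p - q))) _.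
  have -> : (2^-1 : R) ^+ 2 = 4^-1 by rewrite expr2 -invfM; congr (_^-1); ring.
  by have := sqr_ge0 `|p - q|; nra.
have half_bounds : 0 <= (2^-1 : R) < 1 by rewrite invr_ge0 ler0n invf_lt1 ?ltr1n.
have [p [fix_p uniq_p]] := contraction_unique_fixed_point half_bounds half_contr.
exists p; split=> [|q fq].
  by apply/esym/uniq_p; rewrite -iterSr iterS fix_p.
by apply: uniq_p; elim: (k) => //= j ->.
Qed.

Lemma qform_rV_continuous (R : realType) n (A : 'M[R]_n) :
  continuous (fun r : 'rV[R]_n => qform A r^T).
Proof.
have -> : (fun r : 'rV[R]_n => qform A r^T) =
    (fun r => \sum_i \sum_j r 0 i * A i j * r 0 j).
  by apply: funext => r; rewrite qformE; do 2 (apply: eq_bigr => ? _); rewrite !mxE.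
apply: continuous_big => [|i _]; first exact: add_continuous.
apply: continuous_big => [|j _]; first exact: add_continuous.
move=> r; apply: (@continuousM R _ (fun s : 'rV[R]_n => s 0 i * A i j) (fun s => s 0 j));
  last exact: coord_continuous.
apply: (@continuousM R _ (fun s : 'rV[R]_n => s 0 i) (fun _ => A i j)); first exact: coord_continuous.
exact: cst_continuous.
Qed.

Lemma compact_rV_unit_sphere (R : realType) n : compact [set r : 'rV[R]_n | `|r| = 1].
Proof.
apply: bounded_closed_compact.
  by exists 1; split=> // M /= M_gt1 r /= ->; exact: ltW.
rewrite (_ : [set r | _] = Num.norm @^-1` [set 1]) //.
apply: preimage_closed; last exact: closed_eq.
by move=> r _; exact: norm_continuous.
Qed.

(* mu comes from the maximum of the form on the unit sphere of the max norm; the sphere is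
   taken among row vectors, where the library provides Heine-Borel. *)
Lemma negdef_qform_le (R : realType) n (A : 'M[R]_n) : negdef A ->
  exists2 mu, 0 < mu & forall x, qform A x <= - (mu * sqnorm x).
Proof.
move=> ndA.
suff [mu mu_gt0 le_mu] : exists2 mu, 0 < mu &
    forall x, x != 0 -> qform A x <= - (mu * sqnorm x).
  exists mu => // x; have [->|/le_mu //] := eqVneq x 0.
  by rewrite /qform /sqnorm mulmx0 mxE big1 ?mulr0 ?oppr0 // => i _; rewrite mxE expr0n.
pose q (r : 'rV[R]_n) := qform A r^T; pose S := [set r : 'rV[R]_n | `|r| = 1].
have normalize (x : 'cV[R]_n) : x != 0 ->
    S (`|x^T|^-1 *: x^T) /\ qform A x = `|x^T| ^+ 2 * q (`|x^T|^-1 *: x^T).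
  move=> x0; have xT_gt0 : 0 < `|x^T| by rewrite normr_gt0 trmx_eq0.
  split; first by rewrite /S /= normrZ normfV normr_id mulVf ?gt_eqF.
  by rewrite /q linearZ /= trmxK qformZ mulrA exprVn mulfV ?mul1r // expf_neq0 ?gt_eqF.
have [S0|S_empty] := pselect (S !=set0); last first.
  by exists 1 => // x /normalize[Sx _]; case: S_empty; exists (`|x^T|^-1 *: x^T).
have [r0 /[!inE] Sr0 r0_max] := compact_EVT_max S0 (@compact_rV_unit_sphere R n)
  (continuous_subspaceT (@qform_rV_continuous R n A)).
have qr0_lt0 : q r0 < 0.
  apply: ndA; rewrite trmx_eq0; apply/eqP => r0_eq0.
  by move: Sr0; rewrite /S /= r0_eq0 normr0 => /esym/eqP; rewrite oner_eq0.
exists (- q r0 / (n%:R + 1)); first by rewrite divr_gt0 ?oppr_gt0 ?ltr_wpDl.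
move=> x /normalize[Sx ->].
have le_max : q (`|x^T|^-1 *: x^T) <= q r0 by apply: r0_max; rewrite inE.
have xn : sqnorm x <= n%:R * `|x^T| ^+ 2.
  by apply: sqnorm_le_coord_bound => i; have := normr_coord_le_mx_norm x^T 0 i; rewrite mxE.
set t := `|x^T| ^+ 2 in xn *; set N := n%:R + 1.
have N_gt0 : 0 < N by rewrite ltr_wpDl.
have t_ge0 : 0 <= t by exact: sqr_ge0.
rewrite !mulNr opprK [leRHS]mulrAC ler_pdivlMr //.
have tN : sqnorm x <= t * N by rewrite /N mulrDr mulr1 mulrC; have := ler0n R n; lra.
apply: le_trans (_ : t * q r0 * N <= _); first by rewrite ler_pM2r //; exact: ler_wpM2l.
by rewrite mulrAC [leRHS]mulrC ler_nM2r.
Qed.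

(* With mu, K from negdef_qform_le and qform_le_sqnorm, sqnorm (e + tau G e) is at most
   (1 - 2 tau mu + tau^2 K) sqnorm e; tau := mu / (K + mu^2 + 1) gives tau K <= mu < 1 / tau. *)
Lemma negdef_damped_step_contraction (R : realType) n (G : 'M[R]_n) : negdef G ->
  exists2 tau, 0 < tau & exists2 rho, 0 <= rho < 1 &
    forall e, sqnorm (e + tau *: (G *m e)) <= rho * sqnorm e.
Proof.
move=> ndG; have [mu mu_gt0 G_mu] := negdef_qform_le ndG.
have [K K_ge0 G_K] := qform_le_sqnorm (G^T *m G).
set N := K + mu ^+ 2 + 1; have N_gt0 : 0 < N by rewrite /N; have := sqr_ge0 mu; lra.
have tau_gt0 : 0 < mu / N by rewrite divr_gt0.
have tau_mu_lt1 : mu / N * mu < 1.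
  by rewrite mulrAC ltr_pdivrMr // mul1r -expr2 /N; lra.
have tauK : mu / N * K <= mu.
  by rewrite mulrAC ler_pdivrMr // ler_wpM2l ?ltW // /N; have := sqr_ge0 mu; lra.
set tau := mu / N in tau_gt0 tau_mu_lt1 tauK *; clearbody tau.
exists tau => //; exists (1 - tau * mu); first by rewrite subr_ge0 ltW //= ltrBlDr ltrDl mulr_gt0.
move=> e; rewrite sqnorm_addZ sqnorm_mulmx.
have := G_mu e; have := G_K e; have := sqnorm_ge0 e.
set s := sqnorm e; set Q := qform G e; set P := qform _ e => s_ge0 PK Qmu.
have h1 : tau * Q <= - (tau * mu * s) by rewrite -mulrA -mulrN ler_pM2l.
have h2 : tau ^+ 2 * P <= tau * mu * s.
  rewrite expr2 -!mulrA ler_pM2l //; apply: le_trans (ler_wpM2l (ltW tau_gt0) PK) _.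
  by rewrite mulrA; exact: ler_wpM2r.
lra.
Qed.

Lemma clip01v_affine_unique_fixed_point (R : realType) n (B : 'M[R]_n) (u : 'cV[R]_n) :
  lyap_diag_stable (B - 1%:M) -> exists! p, clip01v (B *m p + u) = p.
Proof.
move=> [_ [/posdiagP[c -> c_gt0] ndL]].
set C := diag_mx c; set G := C *m (B - 1%:M).
have ndG : negdef G.
  by apply: negdef_symmetric_part; rewrite /G trmx_mul tr_diag_mx.
have [tau tau_gt0 [rho rho_bounds contr]] := negdef_damped_step_contraction ndG.
pose dstep (q b : 'cV[R]_n) := clip01v (q + tau *: (C *m (b - q))).
have dstep_fixed q b : dstep q b = q <-> clip01v b = q.
  have entry i : (q + tau *: (C *m (b - q))) i 0 = q i 0 + tau * c 0 i * (b i 0 - q i 0).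
    by rewrite /C mul_diag_mx !mxE mulrA.
  have t_gt0 i : 0 < tau * c 0 i by rewrite mulr_gt0.
  by split=> /colP fix_q; apply/colP => i; move: (fix_q i);
    rewrite !clip01vE entry => /(clip01_damped_fixed _ _ (t_gt0 i)).
pose T p := dstep p (B *m p + u).
have T_contr p q : sqnorm (T p - T q) <= rho * sqnorm (p - q).
  apply: le_trans (sqnorm_clip01v_sub _ _) (le_trans _ (contr (p - q))).
  rewrite opprD addrACA -scalerBr -mulmxBr /G -mulmxA mulmxBl mul1mx [B *m (p - q)]mulmxBr.
  suff -> : B *m p + u - p - (B *m q + u - q) = B *m p - B *m q - (p - q) by [].
  by apply/colP => i; rewrite !mxE; ring.
have [p [Tp T_uniq]] := sqnorm_contraction_unique_fixed_point rho_bounds T_contr.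
by exists p; split=> [|q /dstep_fixed/T_uniq //]; exact/dstep_fixed.
Qed.

Theorem proposition1 (R : realType) (n : nat) (D W : 'M[R]_n) (u : 'cV[R]_n) :
  posdiag D -> lyap_diag_stable (W - D) ->
  exists! xs : 'cV[R]_n, f1 D W u xs = 0.
Proof.
move=> /posdiagP[d -> d_gt0] stable.
pose Dinv := diag_mx (\row_i (d 0 i)^-1).
have DDinv : diag_mx d *m Dinv = 1%:M.
  by rewrite mulmx_diag -diag_const_mx; congr diag_mx; apply/rowP => i; rewrite !mxE mulfV ?gt_eqF.
have DinvD : Dinv *m diag_mx d = 1%:M by rewrite diag_mx_comm.
have f1_zero x : f1 (diag_mx d) W u x = 0 <->
    clip01v (W *m Dinv *m (diag_mx d *m x) + u) = diag_mx d *m x.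
  rewrite -mulmxA (mulmxA Dinv) DinvD mul1mx /f1 addrC.
  by split=> [/subr0_eq //|->]; exact: subrr.
have [p [fix_p uniq_p]] : exists! p, clip01v (W *m Dinv *m p + u) = p.
  apply: clip01v_affine_unique_fixed_point.
  have -> : W *m Dinv - 1%:M = (W - diag_mx d) *m Dinv by rewrite mulmxBl DDinv.
  by apply: lyap_diag_stable_mulmx_diag stable _ => i; rewrite mxE invr_gt0.
exists (Dinv *m p); split=> [|y /f1_zero /uniq_p ->].
  by apply/f1_zero; rewrite [diag_mx d *m _]mulmxA DDinv mul1mx.
by rewrite mulmxA DinvD mul1mx.
Qed.
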